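(* Let $\alpha,\tau\colon\mathbb{R}\to\mathbb{R}$ be continuous, let $\eta(w)=w+\frac{\alpha(w)}{2}$, and suppose that $\frac{\alpha(s)-\alpha(t)}{s-t}\ge-2$ for all $s<t$, that $\eta(\mathbb{R})=\mathbb{R}$, and that $\mathrm{Lip}(\tau)<2$. Then there is a unique ruled intrinsic graph $\Sigma_{\tau,\alpha}$ with boundary $\partial\Sigma_{\tau,\alpha}=\gamma_\tau\cup X\gamma_\alpha$.
   Context: $\mathbb{H}$ is $\mathbb{R}^3$ with product $(x,y,z)\cdot(x',y',z')=(x+x',y+y',z+z'+\frac{xy'-yx'}{2})$; $X=(1,0,0)$, $Y^t=(0,t,0)$. A horizontal line is $\{p\cdot tv:t\in\mathbb{R}\}$, $v=(a,b,0)\ne0$; a ruled surface is a union of horizontal segments (rulings) with endpoints in its boundary. $V_0=\{(x,0,z)\}$; an intrinsic graph is a set $\Gamma_f=\{u\cdot Y^{f(u)}:u\in D\}$ for some $D\subset V_0$ and $f\colon D\to\mathbb{R}$. For $\phi\colon\mathbb{R}\to\mathbb{R}$, $\gamma_\phi=\{(0,\phi(z),z):z\in\mathbb{R}\}$ is its graph in the $yz$-plane, and $X\gamma_\alpha=\{X\cdot p:p\in\gamma_\alpha\}=\{(1,\alpha(z),z+\frac{\alpha(z)}2):z\in\mathbb{R}\}$. *)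

From Stdlib Require Import Reals Lra.
Open Scope R_scope.

(* The Heisenberg group H = R^3 with
   (x,y,z).(x',y',z') = (x+x', y+y', z+z'+(xy'-yx')/2). *)
Definition pt := (R * R * R)%type.
Definition mkpt (x y z : R) : pt := (x, y, z).
Definition px (p : pt) : R := fst (fst p).
Definition py (p : pt) : R := snd (fst p).
Definition pz (p : pt) : R := snd p.

Definition hmul (p q : pt) : pt :=
  mkpt (px p + px q) (py p + py q)
       (pz p + pz q + (px p * py q - py p * px q) / 2).

Definition Xpt : pt := mkpt 1 0 0.
Definition Ypow (t : R) : pt := mkpt 0 t 0.

Definition hset := pt -> Prop.

Definition hsegment (p : pt) (a b : R) : hset :=
  fun q => exists t, 0 <= t <= 1 /\ q = hmul p (mkpt (t * a) (t * b) 0).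

(* Intrinsic graph Gamma_f = { u . Y^{f(u)} : u in D }, D subset of V_0,
   where points of V_0 = {(x,0,z)} are parametrised by (x,z). *)
Definition intrinsic_graph (D : R -> R -> Prop) (f : R -> R -> R) : hset :=
  fun q => exists x z, D x z /\ q = hmul (mkpt x 0 z) (Ypow (f x z)).

Definition strip01 (x z : R) : Prop := 0 <= x <= 1.

Definition graph_boundary (S : hset) : hset :=
  fun q => S q /\ (px q = 0 \/ px q = 1).

Definition ruled (S bd : hset) : Prop :=
  forall q, S q -> exists p a b,
    (a, b) <> (0, 0) /\ bd p /\ bd (hmul p (mkpt a b 0)) /\
    (forall r, hsegment p a b r -> S r) /\ hsegment p a b q.

Definition gamma (phi : R -> R) : hset :=
  fun q => exists z, q = mkpt 0 (phi z) z.
Definition Xgamma (phi : R -> R) : hset :=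
  fun q => exists p, gamma phi p /\ q = hmul Xpt p.

Definition ruled_graph_with_boundary (tau alpha : R -> R) (S : hset) : Prop :=
  (exists f, forall q, S q <-> intrinsic_graph strip01 f q) /\
  (forall q, graph_boundary S q <-> (gamma tau q \/ Xgamma alpha q)) /\
  ruled S (graph_boundary S).

Definition lip_lt (tau : R -> R) (c : R) : Prop :=
  exists L, L < c /\ forall s t, Rabs (tau s - tau t) <= L * Rabs (s - t).

From Stdlib Require Import Reals Lra IndefiniteDescription.
Open Scope R_scope.

(* A horizontal segment from (0, tau s, s) in direction (1, b, 0) ends at
   (1, tau s + b, s - tau s / 2), while X gamma_alpha is the curve
   (1, alpha w, w + alpha w / 2).  So the rulings are exactly the segments from
   the point of gamma_tau at s to the point of X gamma_alpha at w with
   sigma s = eta w, where sigma s = s - tau s / 2.  As Lip tau < 2, sigma is a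
   bi-Lipschitz homeomorphism of R, so each w determines one ruling, and every
   ruled surface with this boundary lies in the union Sigma of these rulings.
   The point at parameter t of the ruling through w lies over the point of V_0
   at height (1-t)^2 s + 2t(1-t) eta w + t^2 w; as eta is nondecreasing (this
   is the slope condition) this height is a nondecreasing function of w,
   strictly increasing and onto R for t > 0.  Hence Sigma is an intrinsic graph
   over the strip 0 <= x <= 1, and an intrinsic graph over the whole strip that
   is contained in Sigma must be Sigma. *)

Definition expanding (f : R -> R) (k : R) : Prop :=
  forall s t, s <= t -> k * (t - s) <= f t - f s.

Section Expanding.

Variables (f : R -> R) (k : R).
Hypothesis k_gt0 : 0 < k.
Hypothesis f_expanding : expanding f k.

Lemma expanding_dist x y : k * Rabs (x - y) <= Rabs (f x - f y).
Proof.
  destruct (Rle_lt_dec x y) as [Hxy | Hyx].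
  - pose proof (f_expanding x y Hxy).
    assert (0 <= k * (y - x)) by (apply Rmult_le_pos; lra).
    rewrite (Rabs_left1 (x - y)), (Rabs_left1 (f x - f y)); lra.
  - pose proof (f_expanding y x (Rlt_le _ _ Hyx)).
    assert (0 <= k * (x - y)) by (apply Rmult_le_pos; lra).
    rewrite (Rabs_right (x - y)), (Rabs_right (f x - f y)); lra.
Qed.

Lemma expanding_injective x y : f x = f y -> x = y.
Proof.
  intros Hf. pose proof (expanding_dist x y) as Hd.
  rewrite Hf, Rminus_diag, Rabs_R0 in Hd.
  destruct (Req_dec x y) as [Heq | Hne]; [exact Heq |].
  pose proof (Rabs_pos_lt (x - y) ltac:(lra)). nra.
Qed.

Lemma expanding_surjective : continuity f -> forall y, exists x, f x = y.
Proof.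
  intros f_cont y.
  set (d := Rabs (y - f 0) / k + 1).
  assert (Hkd : k * d = Rabs (y - f 0) + k) by (unfold d; field; lra).
  assert (Hd : 0 < d) by (pose proof (Rabs_pos (y - f 0)); nra).
  pose proof (f_expanding 0 d (Rlt_le _ _ Hd)).
  pose proof (f_expanding (- d) 0 ltac:(lra)).
  pose proof (Rle_abs (y - f 0)).
  pose proof (Rle_abs (- (y - f 0))). rewrite Rabs_Ropp in *.
  destruct (IVT (fun x => f x - y) (- d) d) as [x [_ Hx]].
  - intro x. apply continuity_pt_minus; [apply f_cont | apply continuity_pt_const; now intros ? ?].
  - lra.
  - lra.
  - lra.
  - exists x. lra.
Qed.

Variable g : R -> R.
Hypothesis fK : forall y, f (g y) = y.

Lemma expanding_inverse_nondecreasing y1 y2 : y1 <= y2 -> g y1 <= g y2.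
Proof.
  intros Hy. destruct (Rle_lt_dec (g y1) (g y2)) as [Hg | Hg]; [exact Hg |].
  pose proof (f_expanding _ _ (Rlt_le _ _ Hg)) as H.
  rewrite !fK in H. nra.
Qed.

Lemma expanding_inverse_continuous : continuity g.
Proof.
  intros y eps Heps. exists (k * eps). split; [nra |].
  intros x [_ Hx]. simpl in *. unfold R_dist in *.
  pose proof (expanding_dist (g x) (g y)) as H. rewrite !fK in H.
  apply Rmult_lt_reg_l with k; lra.
Qed.

End Expanding.

Lemma pt_eq (p q : pt) : px p = px q -> py p = py q -> pz p = pz q -> p = q.
Proof.
  destruct p as [[x y] z], q as [[x' y'] z']; unfold px, py, pz; simpl.
  intros -> -> ->. reflexivity.
Qed.

Ltac pt_compute :=
  apply pt_eq; unfold hmul, Xpt, Ypow, mkpt, px, py, pz; simpl.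

(* The coordinate z of the point (x, 0, z) of V_0 below q, i.e. q = (x,0,z).Y^y. *)
Definition vcoord (q : pt) : R := pz q - px q * py q / 2.

Lemma pt_eq_vcoord (p q : pt) :
  px p = px q -> py p = py q -> vcoord p = vcoord q -> p = q.
Proof.
  unfold vcoord. intros Hx Hy Hv. apply pt_eq; auto.
  rewrite Hx, Hy in Hv. lra.
Qed.

Lemma intrinsic_graph_iff D f q :
  intrinsic_graph D f q <-> D (px q) (vcoord q) /\ py q = f (px q) (vcoord q).
Proof.
  split.
  - intros [x [z [HD ->]]].
    assert (Hv : vcoord (hmul (mkpt x 0 z) (Ypow (f x z))) = z).
    { unfold vcoord, hmul, Ypow, mkpt, px, py, pz; simpl. field. }
    rewrite Hv. unfold hmul, Ypow, mkpt, px, py; simpl.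
    rewrite Rplus_0_r, Rplus_0_l. auto.
  - intros [HD Hy]. exists (px q), (vcoord q). split; [exact HD |].
    rewrite <- Hy. unfold vcoord. pt_compute; field.
Qed.

Lemma hmul_horizontal_cancel p a b :
  hmul (hmul p (mkpt a b 0)) (mkpt (- a) (- b) 0) = p.
Proof. pt_compute; field. Qed.

Lemma hsegment_reverse p a b r :
  hsegment p a b r -> hsegment (hmul p (mkpt a b 0)) (- a) (- b) r.
Proof.
  intros [t [Ht ->]]. exists (1 - t). split; [lra |]. pt_compute; field.
Qed.

Lemma gamma_hsegment_trivial phi p a b :
  gamma phi p -> gamma phi (hmul p (mkpt a b 0)) -> (a, b) = (0, 0).
Proof.
  intros [s ->] [s' He]. unfold hmul, mkpt, px, py, pz in He; simpl in He.
  injection He as Ea Eb Ez.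
  assert (a = 0) by lra. subst a. assert (Hs : s' = s) by lra. rewrite Hs in Eb.
  f_equal. lra.
Qed.

Lemma Xgamma_hsegment_trivial phi p a b :
  Xgamma phi p -> Xgamma phi (hmul p (mkpt a b 0)) -> (a, b) = (0, 0).
Proof.
  intros [p0 [[v ->] ->]] [p1 [[w ->] He]].
  unfold hmul, Xpt, mkpt, px, py, pz in He; simpl in He.
  injection He as Ea Eb Ez.
  assert (a = 0) by lra. subst a. assert (Hw : w = v) by lra. rewrite Hw in Eb.
  f_equal. lra.
Qed.

Definition sigma (tau : R -> R) (s : R) : R := s - tau s / 2.
Definition eta (alpha : R -> R) (w : R) : R := w + alpha w / 2.

Lemma sigma_expanding tau : lip_lt tau 2 -> exists k, 0 < k /\ expanding (sigma tau) k.
Proof.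
  intros [L [HL Hlip]]. exists (1 - L / 2). split; [lra |].
  intros s t Hst. specialize (Hlip t s).
  rewrite (Rabs_right (t - s)) in Hlip by lra.
  pose proof (Rle_abs (tau t - tau s)). unfold sigma. lra.
Qed.

Lemma eta_nondecreasing alpha :
  (forall s t, s < t -> (alpha s - alpha t) / (s - t) >= -2) ->
  forall v w, v <= w -> eta alpha v <= eta alpha w.
Proof.
  intros Hslope v w Hvw. destruct (Req_dec v w) as [-> | Hne]; [lra |].
  specialize (Hslope v w ltac:(lra)).
  assert (Hdiff : alpha v - alpha w = (alpha v - alpha w) / (v - w) * (v - w))
    by (field; lra).
  unfold eta. nra.
Qed.

Section Ruling.

Variables alpha tau sigma_inv : R -> R.
Variable k : R.
Hypothesis alpha_continuous : continuity alpha.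
Hypothesis k_gt0 : 0 < k.
Hypothesis sigma_expanding : expanding (sigma tau) k.
Hypothesis sigma_invK : forall y, sigma tau (sigma_inv y) = y.
Hypothesis eta_nondecreasing : forall v w, v <= w -> eta alpha v <= eta alpha w.
Hypothesis eta_surjective : forall y, exists w, eta alpha w = y.

Definition foot (w : R) : R := sigma_inv (eta alpha w).

Lemma sigma_foot w : sigma tau (foot w) = eta alpha w.
Proof. apply sigma_invK. Qed.

Lemma foot_unique s w : sigma tau s = eta alpha w -> foot w = s.
Proof.
  intros H. apply (expanding_injective _ _ k_gt0 sigma_expanding).
  now rewrite sigma_foot.
Qed.

Definition ruling (t w : R) : pt :=
  mkpt t ((1 - t) * tau (foot w) + t * alpha w) (foot w - t * tau (foot w) / 2).

Definition height (t w : R) : R :=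
  (1 - t) ^ 2 * foot w + 2 * t * (1 - t) * eta alpha w + t ^ 2 * w.

Definition Sigma : hset := fun q => exists t w, 0 <= t <= 1 /\ q = ruling t w.

Lemma px_ruling t w : px (ruling t w) = t.
Proof. reflexivity. Qed.

Lemma ruling_segment t w :
  hmul (ruling 0 w) (mkpt (t * 1) (t * (alpha w - tau (foot w))) 0) = ruling t w.
Proof. unfold ruling. pt_compute; field. Qed.

Lemma ruling0 w : ruling 0 w = mkpt 0 (tau (foot w)) (foot w).
Proof. unfold ruling. pt_compute; field. Qed.

Lemma ruling1 w : ruling 1 w = hmul Xpt (mkpt 0 (alpha w) w).
Proof.
  pose proof (sigma_foot w) as H. unfold sigma, eta in H.
  unfold ruling. pt_compute; lra.
Qed.

Lemma vcoord_ruling t w : vcoord (ruling t w) = height t w.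
Proof.
  pose proof (sigma_foot w) as H. unfold sigma in H.
  unfold vcoord, ruling, height, mkpt, px, py, pz; simpl.
  replace (tau (foot w)) with (2 * foot w - 2 * eta alpha w) by lra.
  unfold eta. field.
Qed.

Lemma height_expanding t : 0 <= t <= 1 -> expanding (height t) (t ^ 2).
Proof.
  intros Ht v w Hvw. unfold height.
  assert (Hfoot : foot v <= foot w).
  { apply (expanding_inverse_nondecreasing _ _ k_gt0 sigma_expanding _ sigma_invK).
    now apply eta_nondecreasing. }
  pose proof (eta_nondecreasing v w Hvw).
  assert (0 <= (1 - t) ^ 2 * (foot w - foot v))
    by (apply Rmult_le_pos; [apply pow2_ge_0 | lra]).
  assert (0 <= 2 * t * (1 - t) * (eta alpha w - eta alpha v))
    by (apply Rmult_le_pos; [apply Rmult_le_pos |]; lra).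
  lra.
Qed.

Lemma height_continuous t : continuity (height t).
Proof.
  pose proof (expanding_inverse_continuous _ _ k_gt0 sigma_expanding _ sigma_invK).
  unfold height, foot, eta. reg.
Qed.

Lemma height_surjective t : 0 <= t <= 1 -> forall z, exists w, height t w = z.
Proof.
  intros Ht z. destruct (Req_dec t 0) as [-> | Ht0].
  - destruct (eta_surjective (sigma tau z)) as [w Hw]. exists w.
    unfold height. rewrite (foot_unique z w (eq_sym Hw)). ring.
  - apply (expanding_surjective _ (t ^ 2)); [apply pow_lt; lra | | ].
    + now apply height_expanding.
    + apply height_continuous.
Qed.

Lemma ruling_height_inj t v w :
  0 <= t <= 1 -> height t v = height t w -> ruling t v = ruling t w.
Proof.
  intros Ht Hh. destruct (Req_dec t 0) as [-> | Ht0].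
  - unfold height in Hh. simpl in Hh. rewrite !ruling0.
    replace (foot v) with (foot w) by lra. reflexivity.
  - f_equal. apply (expanding_injective (height t) (t ^ 2)); auto.
    + apply pow_lt; lra.
    + now apply height_expanding.
Qed.

Lemma Sigma_intrinsic_graph : exists f, forall q, Sigma q <-> intrinsic_graph strip01 f q.
Proof.
  destruct (functional_choice (fun (xz : R * R) w => 0 <= fst xz <= 1 -> height (fst xz) w = snd xz))
    as [W HW].
  { intros [x z]; simpl. destruct (Rle_dec 0 x); [destruct (Rle_dec x 1) |].
    - destruct (height_surjective x ltac:(lra) z) as [w Hw]. now exists w.
    - exists 0. lra.
    - exists 0. lra. }
  exists (fun x z => py (ruling x (W (x, z)))). intros q. rewrite intrinsic_graph_iff.
  split.
  - intros [t [w [Ht ->]]]. rewrite px_ruling, vcoord_ruling. split; [exact Ht |].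
    specialize (HW (t, height t w) Ht). simpl in HW.
    now rewrite (ruling_height_inj t _ _ Ht HW).
  - intros [Hx Hy]. exists (px q), (W (px q, vcoord q)). split; [exact Hx |].
    specialize (HW (px q, vcoord q) Hx). simpl in HW.
    apply pt_eq_vcoord; [reflexivity | exact Hy |].
    now rewrite vcoord_ruling.
Qed.

Lemma gamma_ruling0 q : gamma tau q -> exists w, q = ruling 0 w.
Proof.
  intros [s ->]. destruct (eta_surjective (sigma tau s)) as [w Hw].
  exists w. rewrite ruling0, (foot_unique s w (eq_sym Hw)). reflexivity.
Qed.

Lemma Sigma_boundary q : graph_boundary Sigma q <-> gamma tau q \/ Xgamma alpha q.
Proof.
  split.
  - intros [[t [w [Ht ->]]] [Hx | Hx]]; rewrite px_ruling in Hx; subst t.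
    + left. exists (foot w). apply ruling0.
    + right. exists (mkpt 0 (alpha w) w). split; [now exists w | apply ruling1].
  - intros [Hq | [p [[w ->] ->]]].
    + destruct (gamma_ruling0 q Hq) as [w ->].
      split; [exists 0, w; split; [lra | reflexivity] | now left].
    + rewrite <- ruling1.
      split; [exists 1, w; split; [lra | reflexivity] | now right].
Qed.

Lemma Sigma_ruled : ruled Sigma (graph_boundary Sigma).
Proof.
  intros q [t [w [Ht ->]]].
  exists (ruling 0 w), 1, (alpha w - tau (foot w)).
  assert (Hend : hmul (ruling 0 w) (mkpt 1 (alpha w - tau (foot w)) 0) = ruling 1 w).
  { now rewrite <- (ruling_segment 1 w), !Rmult_1_l. }
  repeat split.
  - intro H. injection H. lra.
  - exists 0, w. split; [lra | reflexivity].
  - left. reflexivity.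
  - rewrite Hend. exists 1, w. split; [lra | reflexivity].
  - rewrite Hend. right. reflexivity.
  - intros r [s [Hs ->]]. exists s, w. split; [exact Hs | apply ruling_segment].
  - exists t. split; [exact Ht | symmetry; apply ruling_segment].
Qed.

Lemma Sigma_ruled_graph : ruled_graph_with_boundary tau alpha Sigma.
Proof.
  split; [exact Sigma_intrinsic_graph | split; [exact Sigma_boundary | exact Sigma_ruled]].
Qed.

Lemma gamma_Xgamma_segment p a b :
  gamma tau p -> Xgamma alpha (hmul p (mkpt a b 0)) ->
  forall r, hsegment p a b r -> Sigma r.
Proof.
  intros [s ->] [p1 [[w ->] He]].
  unfold hmul, Xpt, mkpt, px, py, pz in He; simpl in He.
  injection He as Ea Eb Ez.
  assert (a = 1) by lra. subst a.
  assert (Hs : foot w = s) by (apply foot_unique; unfold sigma, eta; lra).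
  intros r [t [Ht ->]]. exists t, w. split; [exact Ht |].
  rewrite <- ruling_segment, ruling0, Hs.
  replace b with (alpha w - tau s) by lra. reflexivity.
Qed.

Lemma boundary_segment_sub_Sigma p a b :
  (a, b) <> (0, 0) ->
  gamma tau p \/ Xgamma alpha p ->
  gamma tau (hmul p (mkpt a b 0)) \/ Xgamma alpha (hmul p (mkpt a b 0)) ->
  forall r, hsegment p a b r -> Sigma r.
Proof.
  intros Hab [Hp | Hp] [He | He].
  - now destruct (Hab (gamma_hsegment_trivial _ _ _ _ Hp He)).
  - now apply gamma_Xgamma_segment.
  - intros r Hr. apply hsegment_reverse in Hr. revert r Hr.
    apply gamma_Xgamma_segment; [exact He |].
    now rewrite hmul_horizontal_cancel.
  - now destruct (Hab (Xgamma_hsegment_trivial _ _ _ _ Hp He)).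
Qed.

Lemma ruled_graph_with_boundary_Sigma S :
  ruled_graph_with_boundary tau alpha S -> forall q, S q <-> Sigma q.
Proof.
  intros [[f Hf] [Hbd Hruled]].
  assert (HS : forall q, S q -> Sigma q).
  { intros q Hq. destruct (Hruled q Hq) as [p [a [b [Hab [Hp [He [_ Hq']]]]]]].
    apply Hbd in Hp. apply Hbd in He.
    exact (boundary_segment_sub_Sigma p a b Hab Hp He q Hq'). }
  intros q. split; [apply HS |].
  (* S has a point over (t, height t w); lying in Sigma, it is a point of
     ruling t w' with the same height, hence equal to ruling t w. *)
  intros [t [w [Ht ->]]].
  assert (Hq' : S (hmul (mkpt t 0 (height t w)) (Ypow (f t (height t w))))).
  { apply Hf. exists t, (height t w). split; [exact Ht | reflexivity]. }
  destruct (HS _ Hq') as [t' [w' [Ht' Heq]]].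
  assert (Hx : t' = t).
  { apply (f_equal px) in Heq. unfold hmul, ruling, Ypow, mkpt, px in Heq; simpl in Heq. lra. }
  subst t'.
  assert (Hh : height t w' = height t w).
  { rewrite <- vcoord_ruling, <- Heq. unfold vcoord, hmul, Ypow, mkpt, px, py, pz; simpl. field. }
  rewrite <- (ruling_height_inj t w' w Ht Hh), <- Heq. exact Hq'.
Qed.

End Ruling.

Theorem lemma3p6 (alpha tau : R -> R)
  (Halpha : continuity alpha) (Htau : continuity tau)
  (Hslope : forall s t, s < t -> (alpha s - alpha t) / (s - t) >= -2)
  (Heta : forall y, exists w, w + alpha w / 2 = y)
  (Hlip : lip_lt tau 2) :
  (exists S, ruled_graph_with_boundary tau alpha S) /\
  (forall S1 S2, ruled_graph_with_boundary tau alpha S1 ->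
     ruled_graph_with_boundary tau alpha S2 -> forall q, S1 q <-> S2 q).
Proof.
  destruct (sigma_expanding tau Hlip) as [k [Hk Hsigma]].
  assert (Hsigma_cont : continuity (sigma tau)) by (unfold sigma; reg).
  destruct (functional_choice _ (expanding_surjective _ _ Hk Hsigma Hsigma_cont))
    as [sigma_inv HsigmaK].
  pose proof (eta_nondecreasing alpha Hslope) as Heta_mono.
  split.
  - exists (Sigma alpha tau sigma_inv).
    exact (Sigma_ruled_graph alpha tau sigma_inv k Halpha Hk Hsigma HsigmaK Heta_mono Heta).
  - pose proof (ruled_graph_with_boundary_Sigma alpha tau sigma_inv k Hk Hsigma HsigmaK Heta_mono)
      as Hunique.
    intros S1 S2 H1 H2 q. now rewrite (Hunique S1 H1), (Hunique S2 H2).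
Qed.
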